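(* For every odd integer $T=2k+1\ge 5$ and every $\sigma\in\mathfrak S_3$, the vector $\sigma c$ with $c=[1,1,-1,-1,1,1]$ defines a facet of $P^T$.
   Context: For an integer $T\ge 2$, let $\Omega_T$ be the set of words $w=s_1s_2\cdots s_T$ over $\{1,2,3\}$ with $s_l\neq s_{l+1}$ for $l=1,\dots,T-1$. For $w\in\Omega_T$ and an ordered pair $ij$, $i\neq j$, let $x_{ij}(w)$ be the number of indices $1\le l\le T-1$ with $s_ls_{l+1}=ij$. Vectors of $\mathbb R^6$ are indexed in the order $[x_{12},x_{13},x_{21},x_{23},x_{31},x_{32}]$. Let $a_w=[x_{12}(w),\dots,x_{32}(w)]$ and $P^T=\mathrm{conv}\{a_w:w\in\Omega_T\}$. $\mathfrak S_3$ acts on $\mathbb R^6$ by $(\sigma c)_{ij}=c_{\sigma(i)\sigma(j)}$. A vector $c$ defines a facet of $P^T$ if $c\cdot a_w\ge0$ for all $w\in\Omega_T$ and $\{x\in P^T: c\cdot x=0\}$ is a facet of $P^T$. *)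

From mathcomp Require Import all_boot all_order all_algebra all_fingroup.
Set Implicit Arguments. Unset Strict Implicit. Unset Printing Implicit Defensive.
Import Order.TTheory GRing.Theory Num.Theory.
Local Open Scope ring_scope.

(* Letters 1,2,3 are encoded as the elements 0,1,2 of 'I_3. *)

Definition omega (T : nat) (w : T.-tuple 'I_3) : bool :=
  [forall l : 'I_T, (l.+1 < T)%N ==> (tnth w l != nth ord0 w l.+1)].

Definition xcount (T : nat) (i j : 'I_3) (w : T.-tuple 'I_3) : nat :=
  \sum_(l < T.-1) ((nth ord0 w l == i) && (nth ord0 w l.+1 == j)).

(* coordinate order [x12, x13, x21, x23, x31, x32] *)
Definition l1 : 'I_3 := @Ordinal 3 0 isT.
Definition l2 : 'I_3 := @Ordinal 3 1 isT.
Definition l3 : 'I_3 := @Ordinal 3 2 isT.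

Definition pair_of (k : 'I_6) : 'I_3 * 'I_3 :=
  match val k with
  | 0 => (l1, l2) | 1 => (l1, l3) | 2 => (l2, l1)
  | 3 => (l2, l3) | 4 => (l3, l1) | _ => (l3, l2) end.

Definition idx_of (i j : 'I_3) : 'I_6 :=
  odflt ord0 [pick k : 'I_6 | pair_of k == (i, j)].

Definition avec (R : nzRingType) (T : nat) (w : T.-tuple 'I_3) : 'rV[R]_6 :=
  \row_k (xcount (pair_of k).1 (pair_of k).2 w)%:R.

Definition PT (R : realFieldType) (T : nat) : 'rV[R]_6 -> Prop :=
  fun x => exists lam : T.-tuple 'I_3 -> R,
    (forall w, 0 <= lam w) /\
    \sum_(w | omega w) lam w = 1 /\
    x = \sum_(w | omega w) lam w *: @avec R _ w.

Definition sact (R : nzRingType) (s : 'S_3) (c : 'rV[R]_6) : 'rV[R]_6 :=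
  \row_k c 0 (idx_of (s (pair_of k).1) (s (pair_of k).2)).

Definition dotv (R : nzRingType) (c x : 'rV[R]_6) : R := \sum_k c 0 k * x 0 k.

Definition aff_indep (R : nzRingType) (m : nat) (p : 'I_m -> 'rV[R]_6) : Prop :=
  forall mu : 'I_m -> R,
    \sum_i mu i = 0 -> \sum_i mu i *: p i = 0 -> forall i, mu i = 0.

(* aff_size S n : the maximal number of affinely independent points of S is n,
   i.e. S has affine dimension n - 1 (n = 0 iff S is empty). *)
Definition aff_size (R : nzRingType) (S : 'rV[R]_6 -> Prop) (n : nat) : Prop :=
  (exists p : 'I_n -> 'rV[R]_6, (forall i, S (p i)) /\ aff_indep p) /\
  (forall p : 'I_n.+1 -> 'rV[R]_6, (forall i, S (p i)) -> ~ aff_indep p).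

Definition defines_facet (R : realFieldType) (T : nat) (c : 'rV[R]_6) : Prop :=
  (forall w : T.-tuple 'I_3, omega w -> 0 <= dotv c (@avec R _ w)) /\
  exists m : nat,
    aff_size (@PT R T) m.+1 /\
    aff_size (fun x => @PT R T x /\ dotv c x = 0) m.

Definition c7 (R : nzRingType) : 'rV[R]_6 :=
  \row_k [:: 1; 1; -1; -1; 1; 1]`_k.

From mathcomp Require Import all_boot all_order all_algebra all_fingroup.
From mathcomp Require Import ring lra zify.
Set Implicit Arguments. Unset Strict Implicit. Unset Printing Implicit Defensive.
Import Order.TTheory GRing.Theory Num.Theory.
Local Open Scope ring_scope.

(* With a = s^-1(2), the functional s c weighs every transition x y by -1 if
   x = a and by +1 otherwise, so (s c) . a_w is the sum of these weights over
   the first T - 1 = 2k letters of w.  Grouped in consecutive pairs of distinct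
   letters, this sum is nonnegative.
   All points of P^T satisfy sum x = 2k, and those of the face also satisfy
   (s c) . x = 0, hence the sums over the transitions starting with a and with
   b, c are both k; this bounds the affine dimensions by 5 and 4.  Conversely,
   writing b, c for the other two letters, the words (x y)^k z with
   x y z = aba, aca, abc, acb, bac, bcb give six affinely independent points of
   P^T, the first five of which lie on the face. *)

Lemma ord3P (a : 'I_3) : [\/ a = l1, a = l2 | a = l3].
Proof.
case: a => [[|[|[|m]]] Hm] //.
- by apply: Or31; apply: val_inj.
- by apply: Or32; apply: val_inj.
- by apply: Or33; apply: val_inj.
Qed.

Lemma pair_of_inj : injective pair_of.
Proof.
by do 2![case=> [[|[|[|[|[|[|?]]]]]] ?] //] => _; apply: val_inj.
Qed.

Lemma pair_of_neq (k : 'I_6) : (pair_of k).1 != (pair_of k).2.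
Proof. by case: k => [[|[|[|[|[|[|?]]]]]] ?]. Qed.

Lemma pair_ofP (u v : 'I_3) : u != v -> exists k, pair_of k = (u, v).
Proof.
case: (ord3P u) => ->; case: (ord3P v) => -> // _.
- by exists (@Ordinal 6 0 isT).
- by exists (@Ordinal 6 1 isT).
- by exists (@Ordinal 6 2 isT).
- by exists (@Ordinal 6 3 isT).
- by exists (@Ordinal 6 4 isT).
- by exists (@Ordinal 6 5 isT).
Qed.

Lemma pair_ofK (k : 'I_6) : idx_of (pair_of k).1 (pair_of k).2 = k.
Proof.
rewrite /idx_of -surjective_pairing; case: pickP => [k' /eqP /pair_of_inj //|].
by move/(_ k); rewrite eqxx.
Qed.

Lemma idx_ofK (u v : 'I_3) : u != v -> pair_of (idx_of u v) = (u, v).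
Proof. by case/pair_ofP=> k e; have := pair_ofK k; rewrite e /= => ->. Qed.

Lemma sum_pairs (R : nmodType) (F : 'I_3 -> 'I_3 -> R) :
  \sum_(k < 6) F (pair_of k).1 (pair_of k).2 =
  F l1 l2 + F l1 l3 + F l2 l1 + F l2 l3 + F l3 l1 + F l3 l2.
Proof. by rewrite !big_ord_recl big_ord0 /= addr0 !addrA. Qed.

Definition cweight (R : nzRingType) (s : 'S_3) (x : 'I_3) : R :=
  if s x == l2 then -1 else 1.

Lemma c7E (R : nzRingType) (k : 'I_6) : c7 R 0 k = cweight R 1 (pair_of k).1.
Proof. by rewrite mxE /cweight perm1; case: k => [[|[|[|[|[|[|?]]]]]] ?]. Qed.

Lemma sact_c7E (R : nzRingType) (s : 'S_3) (k : 'I_6) :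
  sact s (c7 R) 0 k = cweight R s (pair_of k).1.
Proof.
by rewrite mxE c7E idx_ofK ?(inj_eq perm_inj) ?pair_of_neq //= /cweight perm1.
Qed.

Lemma cweight_pair_ge0 (R : realFieldType) (s : 'S_3) (x y : 'I_3) :
  x != y -> 0 <= cweight R s x + cweight R s y.
Proof.
rewrite /cweight => nxy; case: eqP => ex; case: eqP => ey; try lra.
by move: nxy; rewrite -(inj_eq (@perm_inj _ s)) ex ey.
Qed.

Lemma sum_pairs_indicator (R : comNzRingType) (h : 'I_3 -> 'I_3 -> R) (x y : 'I_3) :
  \sum_(k < 6) h (pair_of k).1 (pair_of k).2
                 * ((x == (pair_of k).1) && (y == (pair_of k).2))%:R
  = if x != y then h x y else 0.
Proof.
rewrite (sum_pairs (fun u v => h u v * ((x == u) && (y == v))%:R)).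
by case: (ord3P x) => ->; case: (ord3P y) => -> /=; ring.
Qed.

Lemma omega_nth (T : nat) (w : T.-tuple 'I_3) :
  omega w -> forall l, (l.+1 < T)%N -> nth ord0 w l != nth ord0 w l.+1.
Proof.
move/forallP => H l Hl; have := H (Ordinal (ltnW Hl)).
by rewrite /= Hl (tnth_nth ord0).
Qed.

Lemma dot_avec (R : comNzRingType) (T : nat) (w : T.-tuple 'I_3)
    (h : 'I_3 -> 'I_3 -> R) :
  omega w ->
  \sum_(k < 6) h (pair_of k).1 (pair_of k).2 * avec R w 0 k
  = \sum_(l < T.-1) h (nth ord0 w l) (nth ord0 w l.+1).
Proof.
move=> Hw; under eq_bigr do rewrite mxE /xcount natr_sum mulr_sumr.
rewrite exchange_big /=; apply: eq_bigr => l _.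
rewrite sum_pairs_indicator omega_nth //.
by case: T w Hw l => [|T] w Hw [l /=]; rewrite ?ltnS.
Qed.

Lemma avec_sum (R : comNzRingType) (T : nat) (w : T.-tuple 'I_3) :
  omega w -> \sum_k avec R w 0 k = (T.-1)%:R.
Proof.
move=> Hw; have := dot_avec (fun _ _ => 1 : R) Hw.
under eq_bigr do rewrite mul1r.
by move=> ->; rewrite sumr_const card_ord.
Qed.

Lemma avec_PT (R : realFieldType) (T : nat) (w : T.-tuple 'I_3) :
  omega w -> @PT R T (avec R w).
Proof.
move=> Hw; exists (fun w' => (w' == w)%:R); split; first by move=> w'; case: eqP.
split; first by rewrite (bigD1 w) //= eqxx big1 ?addr0 // => w' /andP[_ /negbTE ->].
rewrite (bigD1 w) //= eqxx scale1r big1 ?addr0 // => w' /andP[_ /negbTE ->].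
by rewrite scale0r.
Qed.

Lemma PT_sum (R : realFieldType) (T : nat) (x : 'rV[R]_6) :
  @PT R T x -> \sum_k x 0 k = (T.-1)%:R.
Proof.
case=> lam [_ [lam1 ->]]; under eq_bigr do rewrite summxE.
rewrite exchange_big /=.
transitivity (\sum_(w | omega w) lam w * (T.-1)%:R); last by rewrite -mulr_suml lam1 mul1r.
apply: eq_bigr => w Hw; under eq_bigr do rewrite mxE.
by rewrite -mulr_sumr avec_sum.
Qed.

Lemma sum_cweight_ge0 (R : realFieldType) (s : 'S_3) (f : nat -> 'I_3) (n : nat) :
  (forall l, (l < 2 * n)%N -> f l != f l.+1) ->
  0 <= \sum_(l < 2 * n) cweight R s (f l).
Proof.
elim: n => [|n IH] Hf; first by rewrite big_ord0.
rewrite (_ : (2 * n.+1 = (2 * n).+2)%N); last by lia.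
rewrite !big_ord_recr /= -addrA; apply: addr_ge0.
  by apply: IH => l Hl; apply: Hf; lia.
by apply: cweight_pair_ge0; apply: Hf; lia.
Qed.

Lemma sact_c7_ge0 (R : realFieldType) (s : 'S_3) (n : nat)
    (w : ((2 * n).+1).-tuple 'I_3) :
  omega w -> 0 <= dotv (sact s (c7 R)) (avec R w).
Proof.
move=> Hw; rewrite /dotv; under eq_bigr do rewrite sact_c7E.
rewrite (dot_avec (fun x _ => cweight R s x) Hw) /=.
by apply: sum_cweight_ge0 => l Hl; apply: omega_nth => //; lia.
Qed.

Lemma aff_indep_lift_max (R : nzRingType) (m : nat) (p : 'I_m.+1 -> 'rV[R]_6) :
  aff_indep p -> aff_indep (fun i : 'I_m => p (lift ord_max i)).
Proof.
move=> indep mu sum0 comb0 i.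
pose nu j := if unlift ord_max j is Some k then mu k else 0.
have nu_lift k : nu (lift ord_max k) = mu k by rewrite /nu liftK.
have sum_recr (V : nmodType) (G : 'I_m.+1 -> V) :
    \sum_j G j = \sum_k G (lift ord_max k) + G ord_max.
  rewrite big_ord_recr /=; congr (_ + _); apply: eq_bigr => k _.
  by congr G; apply: val_inj; rewrite [RHS]lift_max.
have nu_max : nu ord_max = 0 by rewrite /nu unlift_none.
rewrite -nu_lift; apply: indep.
  by rewrite sum_recr nu_max addr0; under eq_bigr do rewrite nu_lift.
by rewrite sum_recr nu_max scale0r addr0; under eq_bigr do rewrite nu_lift.
Qed.

Lemma flat_not_aff_indep (R : fieldType) (r n : nat) (A : 'M[R]_(6, r))
    (b : 'rV_r) (p : 'I_n -> 'rV[R]_6) :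
  row_full A -> (7 - r < n)%N -> (forall i, p i *m A = b) -> ~ aff_indep p.
Proof.
move=> fullA lt_n pA indep.
pose P : 'M[R]_(n, 6 + 1) := \matrix_i row_mx (p i) 1.
pose C : 'M[R]_(6 + 1, r) := col_mx A (- b).
have PC : P *m C = 0.
  apply/row_matrixP => i; rewrite row_mul rowK mul_row_col pA mul1mx row0.
  exact: subrr.
have rankC : \rank C = r.
  apply/eqP; rewrite eqn_leq rank_leq_col -[X in (X <= _)%N](eqP fullA).
  by rewrite mxrankS // -addsmxE addsmxSl.
have rankP : (\rank P <= 7 - r)%N.
  by rewrite -rankC -mxrank_ker mxrankS //; apply/sub_kermxP.
have /matrix0Pn [i0 [j0 nz]] : kermx P != 0.
  by apply/eqP => ker0; move: (mxrank_ker P); rewrite ker0 mxrank0; lia.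
pose u := row i0 (kermx P).
have uP : u *m P = 0 by rewrite -row_mul mulmx_ker row0.
have comb0 : \sum_i u 0 i *: p i = 0.
  move: (congr1 lsubmx uP); rewrite mulmx_sum_row linear_sum linear0.
  by under eq_bigr do rewrite rowK linearZ /= row_mxKl.
have sum0 : \sum_i u 0 i = 0.
  move: (congr1 (fun M => rsubmx M 0 0) uP); rewrite mulmx_sum_row linear_sum.
  rewrite linear0 summxE mxE; under eq_bigr do rewrite rowK linearZ /= row_mxKr.
  by rewrite (eq_bigr (fun i => u 0 i)) // => i _; rewrite !mxE eqxx mulr1.
by move: (indep _ sum0 comb0 j0); rewrite mxE => ker0; rewrite ker0 eqxx in nz.
Qed.

Lemma row_full_rowsub (R : fieldType) (m r : nat) (A : 'M[R]_(m, r))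
    (f : 'I_r -> 'I_m) :
  rowsub f A = 1%:M -> row_full A.
Proof. by move=> fA; apply/row_fullP; exists (rowsub f 1%:M); rewrite -rowsubE. Qed.

Lemma row_full_ones (R : fieldType) : row_full (const_mx 1 : 'M[R]_(6, 1)).
Proof.
apply: (@row_full_rowsub _ _ _ _ (fun _ => 0)).
by apply/matrixP => i j; rewrite !mxE !ord1.
Qed.

Fixpoint adjsum (T : Type) (V : nmodType) (F : T -> T -> V) (s : seq T) : V :=
  if s is x :: t then (if t is y :: _ then F x y + adjsum F t else 0) else 0.

Lemma sum_adjacent (T : Type) (x0 : T) (V : nmodType) (F : T -> T -> V) (m : nat)
    (w : m.-tuple T) :
  \sum_(l < m.-1) F (nth x0 w l) (nth x0 w l.+1) = adjsum F w.
Proof.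
case: w => s /= /eqP <-; elim: s => [|x [|y t] IH].
- by rewrite big_ord0.
- by rewrite big_ord0.
- by rewrite -[RHS]/(F x y + adjsum F (y :: t)) -IH big_ord_recl.
Qed.

Fixpoint alt_seq (T : Type) (x y z : T) (n : nat) : seq T :=
  if n is n'.+1 then x :: y :: alt_seq x y z n' else [:: z].

Lemma size_alt_seq (T : Type) (x y z : T) (n : nat) :
  size (alt_seq x y z n) = (2 * n).+1.
Proof. by elim: n => [|n IH] //=; rewrite IH; lia. Qed.

Definition alt_tuple (x y z : 'I_3) (n : nat) : ((2 * n).+1).-tuple 'I_3 :=
  Tuple (introT eqP (size_alt_seq x y z n)).

Lemma adjsum_alt_seq (T : Type) (V : nmodType) (F : T -> T -> V) (x y z : T) (n : nat) :
  adjsum F (alt_seq x y z n.+1) = F x y *+ n.+1 + F y x *+ n + F y z.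
Proof.
elim: n => [|n IH]; first by rewrite /= mulr0n !addr0.
rewrite -[LHS]/(F x y + (F y x + adjsum F (alt_seq x y z n.+1))) IH.
by rewrite !mulrS !addrA (addrAC (F x y) (F y x)) (addrAC _ (F y x)).
Qed.

Lemma alt_tuple_omega (x y z : 'I_3) (n : nat) :
  x != y -> y != z -> omega (alt_tuple x y z n).
Proof.
move=> xy yz; have : sorted (fun u v => u != v) (alt_seq x y z n).
  elim: n => [|n IH] //=; rewrite xy /=; case: n IH => [|n] /= IH; first by rewrite yz.
  by move: IH => /andP[_ ->]; rewrite eq_sym xy.
move=> sorted_alt; apply/forallP => l; apply/implyP; rewrite (tnth_nth ord0) /=.
move: (nat_of_ord l) => {}l; rewrite -(size_alt_seq x y z n).
by case: (alt_seq x y z n) sorted_alt => [//|h t] /(pathP ord0) neq; apply: neq.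
Qed.

Lemma avec_alt_tuple (R : nzRingType) (x y z u v : 'I_3) (n : nat) :
  u != v ->
  avec R (alt_tuple x y z n.+1) 0 (idx_of u v) =
  ((x == u) && (y == v))%:R *+ n.+1 + ((y == u) && (x == v))%:R *+ n
  + ((y == u) && (z == v))%:R.
Proof.
move=> uv; rewrite mxE idx_ofK //= /xcount natr_sum.
by rewrite (sum_adjacent ord0 (fun p q => ((p == u) && (q == v))%:R : R))
  [LHS]adjsum_alt_seq.
Qed.

Lemma dot_sact_c7_alt_tuple (R : comNzRingType) (s : 'S_3) (x y z : 'I_3) (n : nat) :
  x != y -> y != z ->
  dotv (sact s (c7 R)) (avec R (alt_tuple x y z n.+1))
  = (cweight R s x + cweight R s y) *+ n.+1.
Proof.
move=> xy yz; rewrite /dotv; under eq_bigr do rewrite sact_c7E.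
rewrite (dot_avec (fun p _ => cweight R s p) (alt_tuple_omega _ xy yz)).
rewrite (sum_adjacent ord0 (fun p _ => cweight R s p)) [LHS]adjsum_alt_seq.
by rewrite mulrnDl -addrA -mulrSr.
Qed.

Definition witness_words (a b c : 'I_3) (n : nat) : seq (((2 * n).+1).-tuple 'I_3) :=
  [:: alt_tuple a b a n; alt_tuple a c a n; alt_tuple a b c n;
      alt_tuple a c b n; alt_tuple b a c n; alt_tuple b c b n].

Definition witness (R : nzRingType) (a b c : 'I_3) (n : nat) (i : 'I_6) : 'rV[R]_6 :=
  avec R (nth (alt_tuple a b a n) (witness_words a b c n) i).

(* The coordinates ab, ac, ba, bc, ca, cb of \sum_i m_i a_(W_i) for the six
   witness words W_i of length 2N + 3. *)
Lemma witness_system_trivial (R : realFieldType) (N m0 m1 m2 m3 m4 m5 : R) :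
  0 <= N ->
  (N + 1) * (m0 + m2) + N * m4 = 0 ->
  (N + 1) * (m1 + m3) + m4 = 0 ->
  (N + 1) * (m0 + m4) + N * m2 = 0 ->
  m2 + (N + 1) * m5 = 0 ->
  (N + 1) * m1 + N * m3 = 0 ->
  m3 + (N + 1) * m5 = 0 ->
  [/\ m0 = 0, m1 = 0, m2 = 0, m3 = 0 & m4 = 0 /\ m5 = 0].
Proof.
move=> N0 e_ab e_ac e_ba e_bc e_ca e_cb.
have N1 : N + 1 != 0 by rewrite lt0r_neq0 // ltr_wpDl.
have cancelN1 x : (N + 1) * x = 0 -> x = 0 by move/eqP; rewrite mulf_eq0 (negbTE N1) => /eqP.
have m32 : m3 = m2 by lra.
have m42 : m4 = m2 by lra.
rewrite m32 m42 in e_ab e_ac e_ca *.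
have m2_0 : m2 = 0 by lra.
rewrite m2_0 in e_ab e_bc e_ca.
by split; try split; try done; apply: cancelN1; lra.
Qed.

Lemma witness_aff_indep (R : realFieldType) (a b c : 'I_3) (n : nat) :
  a != b -> a != c -> b != c -> aff_indep (witness R a b c n.+1).
Proof.
move=> ab ac bc mu _ comb0.
pose m (j : nat) := mu (inord j).
have mu_m (i : 'I_6) : mu i = m i by rewrite /m inord_val.
have coord u v : u != v ->
    \sum_(i < 6) m i * witness R a b c n.+1 i 0 (idx_of u v) = 0.
  move=> uv; have := congr1 (fun x : 'rV_6 => x 0 (idx_of u v)) comb0.
  rewrite summxE mxE => E; rewrite -[RHS]E; apply: eq_bigr => i _.
  by rewrite [RHS]mxE mu_m.
have ba : b != a by rewrite eq_sym.
have ca : c != a by rewrite eq_sym.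
have cb : c != b by rewrite eq_sym.
move: (coord a b ab) (coord a c ac) (coord b a ba) (coord b c bc) (coord c a ca) (coord c b cb).
rewrite !big_ord_recl big_ord0 /witness /= !avec_alt_tuple //.
rewrite !eqxx (negbTE ab) (negbTE ac) (negbTE bc) (negbTE ba) (negbTE ca) (negbTE cb) /=.
rewrite !big_ord0 !mul0rn mulrSr /bump /=.
set N := n%:R; have N0 : 0 <= N by exact: ler0n.
move=> e_ab e_ac e_ba e_bc e_ca e_cb.
have [z0 z1 z2 z3 [z4 z5]] : [/\ m 0 = 0, m 1 = 0, m 2 = 0, m 3 = 0 & m 4 = 0 /\ m 5 = 0].
  by apply: (witness_system_trivial (N := N)); lra.
by move=> i; rewrite mu_m; case: i => [[|[|[|[|[|[|?]]]]]] ?].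
Qed.

Lemma witness_PT (R : realFieldType) (a b c : 'I_3) (n : nat) (i : 'I_6) :
  a != b -> a != c -> b != c -> @PT R (2 * n).+1 (witness R a b c n i).
Proof.
move=> ab ac bc; apply: avec_PT.
by case: i => [[|[|[|[|[|[|?]]]]]] ?] //=; apply: alt_tuple_omega; rewrite // eq_sym.
Qed.

Lemma witness_on_face (R : realFieldType) (s : 'S_3) (a b c : 'I_3) (n : nat)
    (i : 'I_5) :
  s a = l2 -> s b != l2 -> s c != l2 -> b != c ->
  dotv (sact s (c7 R)) (witness R a b c n.+1 (lift ord_max i)) = 0.
Proof.
move=> sa sb sc bc.
have ab : a != b by rewrite -(inj_eq (@perm_inj _ s)) sa eq_sym.
have ac : a != c by rewrite -(inj_eq (@perm_inj _ s)) sa eq_sym.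
have [wa wb wc] : [/\ cweight R s a = -1, cweight R s b = 1 & cweight R s c = 1].
  by rewrite /cweight sa eqxx (negbTE sb) (negbTE sc).
by case: i => [[|[|[|[|[|?]]]]] ?] //=;
  rewrite dot_sact_c7_alt_tuple ?wa ?wb ?wc ?(addNr, addrN) ?mul0rn // eq_sym.
Qed.

Lemma PT_mul_ones (R : realFieldType) (T : nat) (x : 'rV[R]_6) :
  @PT R T x -> x *m (const_mx 1 : 'M_(6, 1)) = const_mx (T.-1)%:R.
Proof.
move/PT_sum => sumx; apply/rowP => j; rewrite !mxE -sumx.
by apply: eq_bigr => k _; rewrite mxE mulr1.
Qed.

Definition first_letter_mx (R : nzRingType) (a : 'I_3) : 'M[R]_(6, 2) :=
  \matrix_(k, j) (if j == 0 then (pair_of k).1 != a else (pair_of k).1 == a)%:R.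

Lemma row_full_first_letter_mx (R : fieldType) (a b : 'I_3) :
  a != b -> row_full (first_letter_mx R a).
Proof.
move=> ab; apply: (@row_full_rowsub _ _ _ _
  (fun j : 'I_2 => if j == 0 then idx_of b a else idx_of a b)).
apply/matrixP => i j; rewrite !mxE.
case: i => [[|[|?]] ?] //; rewrite idx_ofK ?(eq_sym b) //=;
  by case: j => [[|[|?]] ?] //=; rewrite ?eqxx ?(negbTE ab) ?(eq_sym b) ?(negbTE ab).
Qed.

Lemma face_mul_first_letter_mx (R : realFieldType) (s : 'S_3) (k : nat)
    (x : 'rV[R]_6) :
  @PT R (2 * k).+1 x -> dotv (sact s (c7 R)) x = 0 ->
  x *m first_letter_mx R ((s^-1)%g l2) = const_mx k%:R.
Proof.
set a := (s^-1)%g l2 => /PT_sum sumx dot0.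
pose S (P : pred 'I_3) := \sum_i x 0 i * (P (pair_of i).1)%:R.
have sum_split : \sum_i x 0 i = S (predC1 a) + S (pred1 a).
  rewrite -big_split; apply: eq_bigr => i _ /=.
  by case: ((pair_of i).1 == a); rewrite ?(mulr1, mulr0, addr0, add0r).
have dot_split : dotv (sact s (c7 R)) x = S (predC1 a) - S (pred1 a).
  rewrite /dotv -sumrB; apply: eq_bigr => i _; rewrite sact_c7E /cweight /=.
  rewrite -[_ == l2](inj_eq (@perm_inj _ (s^-1)%g)) permK -/a.
  by case: ((pair_of i).1 == a); rewrite /= ?(mulr1, mulr0, subr0, sub0r, mulN1r, mul1r).
have [S1 S2] : S (predC1 a) = k%:R /\ S (pred1 a) = k%:R.
  by move: sumx dot0; rewrite sum_split dot_split /= natrM; split; lra.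
apply/rowP => j; rewrite !mxE; case: j => [[|[|?]] ?] //=; [rewrite -S1 | rewrite -S2];
  by apply: eq_bigr => i _; rewrite mxE.
Qed.

Theorem proposition7 (R : realFieldType) (k : nat) (s : 'S_3) :
  (2 <= k)%N -> @defines_facet R (2 * k).+1 (sact s (@c7 R)).
Proof.
(* The argument only needs k >= 1. *)
case: k => [//|n] _.
set a := (s^-1)%g l2; set b := (s^-1)%g l1; set c := (s^-1)%g l3.
have [sa sb sc] : [/\ s a = l2, s b = l1 & s c = l3] by rewrite !permKV.
have [ab ac bc] : [/\ a != b, a != c & b != c] by rewrite !(inj_eq perm_inj).
split; first exact: sact_c7_ge0.
exists 5%N; split; split.
- exists (witness R a b c n.+1); split; first by move=> i; exact: witness_PT.
  exact: witness_aff_indep.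
- move=> p Pp; apply: (flat_not_aff_indep (row_full_ones R)) => // i.
  exact: PT_mul_ones (Pp i).
- exists (fun i => witness R a b c n.+1 (lift ord_max i)); split.
    by move=> i; split; [exact: witness_PT | apply: witness_on_face; rewrite ?sb ?sc].
  exact/aff_indep_lift_max/witness_aff_indep.
- move=> p Pp; apply: (flat_not_aff_indep (row_full_first_letter_mx R ab)) => // i.
  by case: (Pp i); exact: face_mul_first_letter_mx.
Qed.
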